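(* Let $\mathcal{F}$ be a $3$-uniform linear family and let $\mathcal{M}$ be a maximum matching of $\mathcal{F}$. If $A,B,C$ are three distinct members of $\mathcal{M}$, then $|D_2(A,B,C)|\leq 21$.
   Context: A family is a finite collection of distinct subsets of a vertex set; $3$-uniform means every member has exactly $3$ elements and linear means any two distinct members share at most one vertex. A matching is a collection of pairwise disjoint members; a maximum matching is one of largest possible size. $X_{\mathcal{M}}=\bigcup_{A\in\mathcal{M}}A$, $D_2(\mathcal{F})=\{E\in\mathcal{F}:|E\cap X_{\mathcal{M}}|=2\}$, and for $A,B,C\in\mathcal{M}$, $D_2(A,B,C)=\{E\in D_2(\mathcal{F}): |E\cap(A\cup B\cup C)|=2\}$. *)

From mathcomp Require Import all_boot.
Set Implicit Arguments. Unset Strict Implicit. Unset Printing Implicit Defensive.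

Section Defs.
Variable T : finType.

Definition uniform3 (F : {set {set T}}) : Prop :=
  forall E, E \in F -> #|E| = 3.

Definition linear_family (F : {set {set T}}) : Prop :=
  forall E E', E \in F -> E' \in F -> E != E' -> #|E :&: E'| <= 1.

Definition is_matching (F M : {set {set T}}) : Prop :=
  M \subset F /\
  forall A B, A \in M -> B \in M -> A != B -> [disjoint A & B].

Definition is_maximum_matching (F M : {set {set T}}) : Prop :=
  is_matching F M /\ forall M', is_matching F M' -> #|M'| <= #|M|.

Definition XM (M : {set {set T}}) : {set T} := \bigcup_(A in M) A.

Definition D2 (F M : {set {set T}}) : {set {set T}} :=
  [set E in F | #|E :&: XM M| == 2].

Definition D2ABC (F M : {set {set T}}) (A B C : {set T}) : {set {set T}} :=
  [set E in D2 F M | #|E :&: (A :|: B :|: C)| == 2].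

End Defs.

(* The members of D_2(A,B,C) meet A u B u C in two vertices lying in different
   members of M, and their third vertex lies outside X_M.  Numbering the nine
   vertices of A u B u C as 0..8, with [part x = x / 3] recording the member,
   every E in D_2(A,B,C) becomes one of the 27 edges of K_{3,3,3}, coloured by
   its outside vertex; by linearity distinct members give distinct edges and
   the colouring is proper.  Replacing the members of M met by a rainbow
   matching of k such edges by the k corresponding sets would enlarge M unless
   these edges meet at least k members.  A computer search shows that no such
   coloured graph contains a fixed 13-edge graph [forbidden_pattern], and that
   every subgraph of K_{3,3,3} with at most 5 missing edges contains a copy of
   it under a symmetry of K_{3,3,3}; hence at most 21 edges are present. *)

From mathcomp Require Import all_boot zify.
Set Implicit Arguments. Unset Strict Implicit. Unset Printing Implicit Defensive.

Definition index_pairs (n : nat) : seq (nat * nat) :=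
  [seq pq <- [seq (p, q) | p <- iota 0 n, q <- iota 0 n] | pq.1 < pq.2].

Lemma mem_index_pairs n p q : ((p, q) \in index_pairs n) = (p < q < n).
Proof.
rewrite mem_filter /=; case: ltnP => //= lt_pq.
apply/allpairsP/idP => [[[x y] [_ y_n [_ ->]]]|lt_qn]; first by rewrite mem_iota in y_n.
by exists (p, q); rewrite !mem_iota /= lt_qn (ltn_trans lt_pq).
Qed.

Fixpoint subseqs_upto (X : Type) (k : nat) (s : seq X) : seq (seq X) :=
  match s, k with
  | x :: s', k'.+1 => [seq x :: t | t <- subseqs_upto k' s'] ++ subseqs_upto k s'
  | _, _ => [:: [::]]
  end.

Lemma mem_subseqs_upto (X : eqType) k (s C : seq X) :
  C \in subseqs_upto k s -> {subset C <= s}.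
Proof.
elim: s k C => [|x s IHs] [|k] C //=; rewrite ?mem_seq1; try by move=> /eqP-> y.
rewrite mem_cat => /orP[/mapP[t /IHs t_s ->] y | /IHs C_s y /C_s]; rewrite !inE.
  by case/orP=> [-> // | /t_s ->]; rewrite orbT.
by move->; rewrite orbT.
Qed.

Lemma uniq_map_neq (X Y : eqType) (f : X -> Y) s x y :
  uniq (map f s) -> x \in s -> y \in s -> x != y -> f x != f y.
Proof.
move=> uniq_fs x_s y_s neq_xy.
have uniq_s := map_uniq uniq_fs.
move: uniq_fs; rewrite (perm_uniq (perm_map f (perm_to_rem x_s))) /= => /andP[fx_rem _].
by apply: contraNneq fx_rem => ->; rewrite map_f // (rem_mem _ y_s) // eq_sym.
Qed.

Section Avoidance.
Variables (X P : eqType) (hits : X -> P -> bool).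

Fixpoint avoidable (k : nat) (s : seq X) (pats : seq P) : bool :=
  match s, k with
  | x :: s', k'.+1 => avoidable k' s' [seq S <- pats | ~~ hits x S] && avoidable k s' pats
  | _, _ => ~~ nilp pats
  end.

Lemma avoidableP k s pats Q : avoidable k s pats -> subseq Q s -> size Q <= k ->
  has (fun S => all (fun x => ~~ hits x S) Q) pats.
Proof.
have nil_avoided pats' :
    ~~ nilp pats' -> has (fun S => all (fun x => ~~ hits x S) [::]) pats'.
  by rewrite has_predT lt0n.
elim: s k pats Q => [|x s IHs] k pats Q.
  by case: k => [|k] /= /nil_avoided ? /eqP->.
case: k => [|k] /=; first by move=> /nil_avoided ? _; rewrite leqn0 size_eq0; move/eqP->.
case/andP=> avoid_x avoid_s; case: Q => [|y Q].
  by move=> _ _; apply: IHs avoid_s _ _; rewrite ?sub0seq.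
rewrite /= ltnS; case: eqP => [-> sub_Qs size_Q | _ sub_yQs size_yQ].
  have /hasP[S] := IHs _ _ _ avoid_x sub_Qs size_Q.
  by rewrite mem_filter => /andP[x_S S_pats] Q_S; apply/hasP; exists S => //=; rewrite x_S.
exact: IHs _ _ (y :: Q) avoid_s sub_yQs size_yQ.
Qed.
End Avoidance.

Section EqualityPatterns.
Variables (m : nat) (D : seq (nat * nat)).

Definition merge (lab : seq nat) (i j : nat) : seq nat :=
  [seq if l == nth 0 lab j then nth 0 lab i else l | l <- lab].

Definition separated (lab : seq nat) : bool :=
  all (fun ij => nth 0 lab ij.1 != nth 0 lab ij.2) D.

Definition pairs_of (C : seq nat) : seq (nat * nat) :=
  [seq (nth 0 C pq.1, nth 0 C pq.2) | pq <- index_pairs (size C)].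

Definition separating_merges (lab C : seq nat) : seq (nat * nat) :=
  [seq ij <- pairs_of C | separated (merge lab ij.1 ij.2)].

(* Positions with equal labels in [lab] are meant to receive equal colours.  The
   search coarsens [lab], keeping the pairs of [D] apart, until every set of [R]
   contains two positions with equal labels, branching on the open set with fewest
   options.  It answers [true] whenever it fails to refute, in particular when out
   of fuel: only its completeness is used. *)
Fixpoint satisfiable (n : nat) (R : seq (seq nat)) (lab : seq nat) : bool :=
  let R' := [seq C <- R | uniq [seq nth 0 lab i | i <- C]] in
  let by_branching C C' :=
    size (separating_merges lab C) <= size (separating_merges lab C') in
  if n is n'.+1 then
    if sort by_branching R' is C :: _ then
      has (fun ij => satisfiable n' (rem C R') (merge lab ij.1 ij.2)) (separating_merges lab C)
    else true
  else true.

Variables (T : eqType) (c : nat -> T).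
Hypothesis D_sep : forall ij, ij \in D -> [/\ ij.1 < m, ij.2 < m & c ij.1 != c ij.2].

Definition refines (lab : seq nat) : Prop :=
  size lab = m /\ {in gtn m &, forall x y, nth 0 lab x = nth 0 lab y -> c x = c y}.

Lemma merge_refines lab i j : refines lab -> i < m -> j < m -> c i = c j ->
  refines (merge lab i j).
Proof.
move=> [size_lab lab_c] lt_im lt_jm cij; split; first by rewrite size_map.
move=> x y lt_xm lt_ym; rewrite !(nth_map 0) ?size_lab //.
have c_j z : z < m -> nth 0 lab z = nth 0 lab j -> c z = c j by move=> ?; apply: lab_c.
have c_i z : z < m -> nth 0 lab z = nth 0 lab i -> c z = c i by move=> ?; apply: lab_c.
case: eqP => [/(c_j _ lt_xm) cx | _]; case: eqP => [/(c_j _ lt_ym) cy | _].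
- by rewrite cx cy.
- by move=> /esym /(c_i _ lt_ym) cy; rewrite cx cy.
- by move=> /(c_i _ lt_xm) cx; rewrite cx cy.
- exact: lab_c.
Qed.

Lemma refines_separated lab : refines lab -> separated lab.
Proof.
move=> [_ lab_c]; apply/allP => -[i j] /D_sep [/= lt_im lt_jm].
exact: contra_neq (lab_c _ _ lt_im lt_jm).
Qed.

Lemma pairs_ofP C : ~~ uniq [seq c i | i <- C] ->
  exists2 ij, ij \in pairs_of C & [/\ ij.1 \in C, ij.2 \in C & c ij.1 = c ij.2].
Proof.
case/(uniqPn (c 0)) => p [q []]; rewrite size_map => lt_pq lt_qC.
rewrite !(nth_map 0) ?(ltn_trans lt_pq) // => cpq.
exists (nth 0 C p, nth 0 C q); last by rewrite !mem_nth ?(ltn_trans lt_pq).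
by apply/mapP; exists (p, q); rewrite ?mem_index_pairs ?lt_pq.
Qed.

Lemma satisfiable_complete n R lab : refines lab ->
  (forall C, C \in R -> {subset C <= gtn m} /\ ~~ uniq [seq c i | i <- C]) ->
  satisfiable n R lab.
Proof.
elim: n R lab => [//|n IHn] R lab lab_c R_c /=.
case E: sort => [//|C R''].
have C_R : C \in R.
  by have := mem_head C R''; rewrite -E mem_sort mem_filter => /andP[].
have [C_m /pairs_ofP [[i j] ij_C [/= /C_m lt_im /C_m lt_jm cij]]] := R_c C C_R.
have lab'_c := merge_refines lab_c lt_im lt_jm cij.
apply/hasP; exists (i, j); first by rewrite mem_filter ij_C refines_separated.
apply: IHn lab'_c _ => C' /mem_rem; rewrite mem_filter => /andP[_]; exact: R_c.
Qed.
End EqualityPatterns.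

Definition part (x : nat) : nat := x %/ 3.

Definition cross_pairs : seq (nat * nat) :=
  [seq e <- index_pairs 9 | part e.1 != part e.2].

Lemma mem_cross_pairs x y :
  ((x, y) \in cross_pairs) = [&& x < y, y < 9 & part x != part y].
Proof. by rewrite mem_filter mem_index_pairs andbC -andbA. Qed.

Definition ends (es : seq (nat * nat)) : seq nat :=
  flatten [seq [:: e.1; e.2] | e <- es].

Lemma mem_ends x es : (x \in ends es) = has (fun e => (x == e.1) || (x == e.2)) es.
Proof. by elim: es => //= e es <-; rewrite !inE orbA. Qed.

Lemma ends_subset es S : {subset es <= S} -> {subset ends es <= ends S}.
Proof.
by move=> sub_es x; rewrite !mem_ends => /hasP[e /sub_es e_S x_e]; apply/hasP; exists e.
Qed.

Lemma ends_cross_pairs x : x \in ends cross_pairs -> x < 9.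
Proof.
rewrite mem_ends => /hasP[[y z]]; rewrite mem_cross_pairs /= => /and3P[lt_yz lt_z9 _].
by case/orP=> /eqP->; rewrite ?(ltn_trans lt_yz).
Qed.

Lemma ends_disjoint es e f x : uniq (ends es) -> e \in es -> f \in es -> e != f ->
  x \in [:: e.1; e.2] -> x \in [:: f.1; f.2] -> False.
Proof.
have ends_of g gs : g \in gs -> x \in [:: g.1; g.2] -> x \in ends gs.
  by move=> g_gs x_g; rewrite mem_ends; apply/hasP; exists g; rewrite // -mem_seq2.
elim: es => //= g es IHes /and3P[].
rewrite inE negb_or => /andP[g1_g2 g1_es] g2_es uniq_es.
have g_es y : y \in [:: g.1; g.2] -> y \in ends es -> False.
  by rewrite !inE => /orP[] /eqP->; [apply/negP | apply/negP].
move=> /predU1P[->|e_es] /predU1P[->|f_es]; rewrite ?eqxx //.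
- by move=> _ x_g x_f; apply: (g_es x x_g); apply: ends_of f_es x_f.
- by move=> _ x_e x_g; apply: (g_es x x_g); apply: ends_of e_es x_e.
- exact: IHes.
Qed.

Definition adjacent (e f : nat * nat) : bool :=
  [|| (e.1 == f.1) && (e.2 != f.2), (e.1 == f.2) && (e.2 != f.1),
      (e.2 == f.1) && (e.1 != f.2) | (e.2 == f.2) && (e.1 != f.1)].

(* A matching meeting fewer parts than it has edges: trading these parts for its
   edges would enlarge a maximum matching, so such a matching is never rainbow. *)
Definition deficient (es : seq (nat * nat)) : bool :=
  uniq (ends es) && (size (undup (map part (ends es))) < size es).

Definition adjacent_positions (S : seq (nat * nat)) : seq (nat * nat) :=
  [seq ij <- index_pairs (size S) | adjacent (nth (0, 0) S ij.1) (nth (0, 0) S ij.2)].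

Definition deficient_positions (S : seq (nat * nat)) : seq (seq nat) :=
  [seq C <- subseqs_upto 4 (iota 0 (size S)) | deficient [seq nth (0, 0) S i | i <- C]].

Definition uncolourable (S : seq (nat * nat)) : bool :=
  let R := deficient_positions S in
  ~~ satisfiable (adjacent_positions S) (size R) R (iota 0 (size S)).

(* Found by computer search. *)
Definition forbidden_pattern : seq (nat * nat) :=
  [:: (0, 3); (0, 4); (0, 5); (0, 6); (1, 3); (1, 4); (1, 5); (1, 6); (2, 3); (2, 4);
      (3, 6); (4, 7); (5, 8)].

Lemma forbidden_pattern_cross : {subset forbidden_pattern <= cross_pairs}.
Proof. by apply/allP. Qed.

Lemma forbidden_pattern_uncolourable : uncolourable forbidden_pattern.
Proof. by vm_compute. Qed.

Definition map_edge (v : nat -> nat) (e : nat * nat) : nat * nat := (v e.1, v e.2).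

Lemma ends_map_edge v es : ends (map (map_edge v) es) = map v (ends es).
Proof. by rewrite /ends; elim: es => //= e es ->. Qed.

Definition automorphism (v : nat -> nat) : Prop :=
  [/\ {in gtn 9, forall x, v x < 9}, {in gtn 9 &, injective v}
    & {in gtn 9 &, forall x y, (part (v x) == part (v y)) = (part x == part y)}].

Definition automorphic_at (v : nat -> nat) (x y : nat) : bool :=
  [&& v x < 9, (v x == v y) == (x == y) & (part (v x) == part (v y)) == (part x == part y)].

Definition is_automorphism (pi : seq nat) : bool :=
  all (fun x => all (automorphic_at (nth 0 pi) x) (iota 0 9)) (iota 0 9).

Lemma is_automorphismP pi : is_automorphism pi -> automorphism (nth 0 pi).
Proof.
move=> pi_aut; have pi_xy x y : x < 9 -> y < 9 -> automorphic_at (nth 0 pi) x y.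
  by move=> lt_x9 lt_y9; apply: (allP (allP pi_aut x _) y); rewrite mem_iota.
split=> [x lt_x9 | x y lt_x9 lt_y9 | x y lt_x9 lt_y9].
- by case/and3P: (pi_xy x x lt_x9 lt_x9).
- by case/and3P: (pi_xy x y lt_x9 lt_y9) => _ /eqP E _ /eqP; rewrite E => /eqP.
- by case/and3P: (pi_xy x y lt_x9 lt_y9) => _ _ /eqP.
Qed.

Definition relabel (v : nat -> nat) (e : nat * nat) : nat * nat :=
  (minn (v e.1) (v e.2), maxn (v e.1) (v e.2)).

Definition pattern_vector (v : nat -> nat) : seq bool :=
  [seq e \in map (relabel v) forbidden_pattern | e <- cross_pairs].

Definition part_automorphism (s : seq nat) (ts : seq (seq nat)) (x : nat) : nat :=
  3 * nth 0 s (part x) + nth 0 (nth [::] ts (part x)) (x %% 3).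

Definition automorphisms : seq (seq nat) :=
  let perms := permutations [:: 0; 1; 2] in
  let perm_pairs := [seq [:: t; t'] | t <- perms, t' <- perms] in
  let perm_triples := [seq t :: ts | t <- perms, ts <- perm_pairs] in
  [seq [seq part_automorphism s ts x | x <- iota 0 9] | s <- perms, ts <- perm_triples].

Lemma automorphisms_ok : all is_automorphism automorphisms.
Proof. by vm_compute. Qed.

Lemma small_sets_avoid_some_copy :
  avoidable (fun n b => nth false b n) 5 (iota 0 27)
    [seq pattern_vector (nth 0 pi) | pi <- automorphisms].
Proof. by vm_compute. Qed.

Section Automorphism.
Variable v : nat -> nat.
Hypothesis v_aut : automorphism v.

Lemma adjacent_map_edge e f : {subset ends [:: e; f] <= gtn 9} ->
  adjacent (map_edge v e) (map_edge v f) = adjacent e f.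
Proof.
case: v_aut => _ v_inj _ ef9.
have E x y : x \in ends [:: e; f] -> y \in ends [:: e; f] -> (v x == v y) = (x == y).
  by move=> /ef9 x9 /ef9 y9; apply/eqP/eqP => [/v_inj->|->].
by rewrite /adjacent /= !E ?inE ?eqxx ?orbT.
Qed.

Lemma relabel_cross e : e \in cross_pairs -> relabel v e \in cross_pairs.
Proof.
case: e => x y; rewrite !mem_cross_pairs => /and3P[lt_xy lt_y9 part_xy].
have lt_x9 := ltn_trans lt_xy lt_y9; case: v_aut => v9 v_inj v_part.
have vxy : v x != v y by apply: contraTneq lt_xy => /v_inj-> //; rewrite ltnn.
have part_vxy : part (v x) != part (v y) by rewrite v_part.
rewrite /relabel /minn /maxn /=; case: (ltnP (v x) (v y)) => [-> | le_vyx] /=.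
  by rewrite v9.
by rewrite ltn_neqAle eq_sym vxy le_vyx v9 // eq_sym.
Qed.
End Automorphism.

Section ColouredCrossGraph.
Variables (T : eqType) (edge : rel nat) (col : nat -> nat -> T).
Hypothesis edge_sym : symmetric edge.
Hypothesis col_sym : forall x y, edge x y -> col x y = col y x.
Hypothesis col_proper : forall x y z, edge x y -> edge x z -> y != z -> col x y != col x z.
Hypothesis rainbow_le : forall es (ks : seq nat),
  all (fun e => edge e.1 e.2) es -> uniq (ends es) -> uniq [seq col e.1 e.2 | e <- es] ->
  {subset map part (ends es) <= ks} -> size es <= size ks.

Let present (e : nat * nat) : bool := edge e.1 e.2.
Let colour (e : nat * nat) : T := col e.1 e.2.

Lemma col_adjacent e f : present e -> present f -> adjacent e f -> colour e != colour f.
Proof.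
case: e f => [x y] [x' y']; rewrite /present /colour /adjacent /=.
move=> exy ex'y' /or4P[] /andP[/eqP eq_ends ne]; subst.
- exact: col_proper.
- by rewrite (col_sym ex'y'); apply: col_proper; rewrite // edge_sym.
- by rewrite (col_sym exy); apply: col_proper; rewrite // edge_sym.
- by rewrite (col_sym exy) (col_sym ex'y'); apply: col_proper; rewrite // edge_sym.
Qed.

Lemma relabelled_pattern_absent S v : automorphism v -> {subset S <= cross_pairs} ->
  uncolourable S -> ~~ all (fun e => present (map_edge v e)) S.
Proof.
move=> v_aut /ends_subset S_cross S_unc.
have S9 : {subset ends S <= gtn 9} by move=> x /S_cross; apply: ends_cross_pairs.
apply/allP => S_present; move/negP: S_unc; apply.
pose e k := nth (0, 0) S k.
have e_S k : k < size S -> e k \in S by apply: mem_nth.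
apply: (satisfiable_complete (m := size S) (c := fun k => colour (map_edge v (e k)))).
- case=> i j; rewrite mem_filter mem_index_pairs /= => /andP[adj /andP[lt_ij lt_jS]].
  have lt_iS := ltn_trans lt_ij lt_jS; split=> //.
  have ij_S : {subset [:: e i; e j] <= S}.
    by move=> f; rewrite !inE => /orP[] /eqP->; rewrite e_S.
  apply: col_adjacent; rewrite ?S_present ?e_S // adjacent_map_edge //.
  by move=> x /(ends_subset ij_S) /S9.
- by split=> [|x y x_lt y_lt]; rewrite ?size_iota // !nth_iota // !add0n => ->.
move=> C; rewrite mem_filter => /andP[/andP[uniq_ends deficient_C] /mem_subseqs_upto C_S].
have {}C_S i : i \in C -> i < size S by move/C_S; rewrite mem_iota.
split=> [i /C_S // | ]; apply/negP => uniq_colours.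
set es := [seq e i | i <- C] in uniq_ends deficient_C.
have es_S : {subset es <= S} by move=> f /mapP[i /C_S /e_S f_S ->].
have es9 : {subset ends es <= gtn 9} := fun x x_es => S9 x (ends_subset es_S x_es).
case: v_aut => v9 v_inj v_part.
suff : size es <= size (undup (map part (ends es))) by rewrite leqNgt deficient_C.
have := rainbow_le (es := map (map_edge v) es)
  (ks := [seq part (v (3 * k)) | k <- undup (map part (ends es))]).
rewrite !size_map; apply.
- by apply/allP => f /mapP[f' /es_S f'_S ->]; apply: S_present.
- by rewrite ends_map_edge (map_inj_in_uniq (sub_in2 es9 v_inj)).
- by rewrite -map_comp -map_comp.
rewrite ends_map_edge -map_comp => p /mapP[x x_es ->] /=.
have lt_x9 : x < 9 := es9 x x_es.
have -> : part (v x) = part (v (3 * part x)).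
  by apply/eqP; rewrite v_part //= ?inE /part; [apply/eqP | ]; lia.
by apply: (map_f (fun k => part (v (3 * k)))); rewrite mem_undup map_f.
Qed.

Lemma present_cross_pairs_le : count present cross_pairs <= 21.
Proof.
rewrite leqNgt; apply/negP => many_present.
pose missing := filter (predC (preim (nth (0, 0) cross_pairs) present)) (iota 0 27).
have size_missing : size missing <= 5.
  have cross_pairsE : map (nth (0, 0) cross_pairs) (iota 0 27) = cross_pairs by [].
  move: many_present; rewrite size_filter -cross_pairsE count_map.
  have := count_predC (preim (nth (0, 0) cross_pairs) present) (iota 0 27).
  set n_present := count _ _; set n_missing := count _ _; rewrite size_iota; lia.
have /hasP[b /mapP[pi pi_aut ->] pi_avoids] :=
  avoidableP small_sets_avoid_some_copy (filter_subseq _ _) size_missing.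
have v_aut := is_automorphismP (allP automorphisms_ok pi pi_aut).
apply: (negP (relabelled_pattern_absent v_aut forbidden_pattern_cross
  forbidden_pattern_uncolourable)).
apply/allP => e e_P; set f := relabel (nth 0 pi) e.
have f_cross : f \in cross_pairs by rewrite relabel_cross ?forbidden_pattern_cross.
have f_nth : nth (0, 0) cross_pairs (index f cross_pairs) = f := nth_index _ f_cross.
have : index f cross_pairs \notin missing.
  apply: contraL pi_avoids => f_missing; apply/allPn; exists (index f cross_pairs) => //.
  by rewrite negbK (nth_map (0, 0)) ?index_mem // f_nth map_f.
rewrite mem_filter mem_iota index_mem f_cross /= f_nth andbT negbK.
by rewrite /f /relabel /present /map_edge /minn /maxn; case: ltnP; rewrite // edge_sym.
Qed.
End ColouredCrossGraph.

Lemma linear_eq (T : finType) (F : {set {set T}}) E E' u v : linear_family F ->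
  E \in F -> E' \in F -> u != v -> u \in E -> v \in E -> u \in E' -> v \in E' -> E = E'.
Proof.
move=> F_lin E_F E'_F neq_uv uE vE uE' vE'; apply/eqP; apply: contraTT isT => neq_EE'.
have uv_EE' : [set u; v] \subset E :&: E'.
  by apply/subsetP => w; rewrite !inE => /orP[] /eqP->; rewrite ?uE ?vE ?uE' ?vE'.
have := leq_trans (subset_leq_card uv_EE') (F_lin _ _ E_F E'_F neq_EE').
by rewrite cards2 neq_uv.
Qed.

Lemma maximum_matching_exchange (T : finType) (F M R N : {set {set T}}) :
  is_maximum_matching F M -> R \subset M -> is_matching F N -> set0 \notin N ->
  (forall E Z, E \in N -> Z \in M :\: R -> [disjoint E & Z]) -> #|N| <= #|R|.
Proof.
move=> [[M_F M_disj] M_max] R_M [N_F N_disj] N_nonempty NZ_disj.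
have N_MR : N :&: (M :\: R) = set0.
  apply/setP => E; rewrite in_setI in_set0; apply/negbTE/andP => -[E_N E_MR].
  move: (NZ_disj E E E_N E_MR); rewrite -setI_eq0 setIid => /eqP E0.
  by move: N_nonempty; rewrite -E0 E_N.
suff : #|(M :\: R) :|: N| <= #|M|.
  rewrite cardsU setIC N_MR cards0 subn0 cardsD (setIidPr R_M).
  by have := subset_leq_card R_M; lia.
apply: M_max; split=> [|X Y]; first by rewrite subUset N_F (subset_trans (subsetDl M R) M_F).
rewrite !in_setU => /orP[X_MR|X_N] /orP[Y_MR|Y_N] neq_XY.
- by move: X_MR Y_MR; rewrite !inE => /andP[_ X_M] /andP[_ Y_M]; apply: M_disj.
- by rewrite disjoint_sym NZ_disj.
- exact: NZ_disj.
- exact: N_disj.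
Qed.

Section ThreeMembers.
Variables (T : finType) (F M : {set {set T}}) (A B C : {set T}) (x0 : T).
Hypotheses (F_uniform : uniform3 F) (F_linear : linear_family F).
Hypothesis M_max : is_maximum_matching F M.
Hypotheses (A_M : A \in M) (B_M : B \in M) (C_M : C \in M).
Hypotheses (neq_AB : A != B) (neq_AC : A != C) (neq_BC : B != C).

Local Notation D := (D2ABC F M A B C).
Local Notation U := (A :|: B :|: C).
Local Notation member k := (nth C [:: A; B] k).
Definition vtx (x : nat) : T := nth x0 (enum (member (part x))) (x %% 3).

Lemma M_F : M \subset F. Proof. by case: M_max => -[]. Qed.

Lemma M_disjoint X Y : X \in M -> Y \in M -> X != Y -> [disjoint X & Y].
Proof. by case: M_max => -[_ M_disj] _; apply: M_disj. Qed.

Lemma member_cases k : [\/ member k = A, member k = B | member k = C].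
Proof. by case: k => [|[|k]]; [constructor 1 | constructor 2 | constructor 3; apply: nth_nil].
Qed.

Lemma member_M k : member k \in M.
Proof. by case: (member_cases k) => ->. Qed.

Lemma member_U k : member k \subset U.
Proof.
by apply/subsetP => x; rewrite !inE; case: (member_cases k) => -> ->; rewrite ?orbT.
Qed.

Lemma card_member k : #|member k| = 3.
Proof. exact/F_uniform/(subsetP M_F)/member_M. Qed.

Lemma member_inj k l : k < 3 -> l < 3 -> member k = member l -> k = l.
Proof.
by case: k l => [|[|[|k]]] [|[|[|l]]] //= _ _ /eqP;
  rewrite /= ?(negbTE neq_AB) ?(negbTE neq_AC) ?(negbTE neq_BC) // eq_sym
    ?(negbTE neq_AB) ?(negbTE neq_AC) ?(negbTE neq_BC).
Qed.

Lemma vtx_member x : vtx x \in member (part x).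
Proof. by rewrite /vtx -mem_enum mem_nth // -cardE card_member ltn_mod. Qed.

Lemma vtx_U x : vtx x \in U.
Proof. exact: subsetP (member_U _) _ (vtx_member x). Qed.

Lemma vtx_inj : {in gtn 9 &, injective vtx}.
Proof.
move=> x y lt_x9 lt_y9 eq_xy; have [eq_part | neq_part] := eqVneq (part x) (part y).
  move: eq_xy; rewrite /vtx eq_part => /eqP.
  rewrite nth_uniq ?enum_uniq -?cardE ?card_member ?ltn_mod // => /eqP eq_mod.
  by rewrite (divn_eq x 3) (divn_eq y 3) -/(part x) -/(part y) eq_part eq_mod.
have: part x != part y -> member (part x) != member (part y).
  by apply: contra_neq => /member_inj; apply; rewrite /part ?ltn_divLR.
move=> /(_ neq_part) /(M_disjoint (member_M _) (member_M _)) /disjointFr.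
by move=> /(_ _ (vtx_member x)); rewrite eq_xy vtx_member.
Qed.

Lemma vtx_onto u : u \in U -> exists2 x, x < 9 & vtx x = u.
Proof.
move=> u_U; have [k lt_k3 u_k] : exists2 k, k < 3 & u \in member k.
  by move: u_U; rewrite !inE => /orP[/orP[]|] u_in; [exists 0 | exists 1 | exists 2].
have lt_i3 : index u (enum (member k)) < 3.
  by rewrite -(card_member k) cardE index_mem mem_enum.
exists (3 * k + index u (enum (member k))); first by lia.
rewrite /vtx /part mulnC divnMDl // divn_small // addn0 modnMDl modn_small //.
by apply: nth_index; rewrite mem_enum.
Qed.

Lemma U_XM : U \subset XM M.
Proof.
apply/subsetP => u /vtx_onto[x _ <-].
exact: subsetP (bigcup_sup _ (member_M _)) _ (vtx_member x).
Qed.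

Lemma D_F E : E \in D -> E \in F.
Proof. by rewrite !inE => /andP[/andP[]]. Qed.

Lemma card_D_U E : E \in D -> #|E :&: U| = 2.
Proof. by rewrite inE => /andP[_ /eqP]. Qed.

Lemma D_XM E : E \in D -> E :&: XM M = E :&: U.
Proof.
move=> E_D; apply/esym/eqP; rewrite eqEcard setIS ?U_XM //= card_D_U //.
by move: E_D; rewrite !inE => /andP[/andP[_ /eqP->]].
Qed.

Lemma D_vtx E u : E \in D -> u \in E -> u \in XM M -> exists2 x, x < 9 & vtx x = u.
Proof.
move=> E_D u_E u_XM; apply: vtx_onto.
by have := in_setI u E (XM M); rewrite D_XM // u_E u_XM inE => /andP[].
Qed.

Definition outer (E : {set T}) : T := odflt x0 [pick w in E :\: XM M].

Lemma outerE E : E \in D -> E :\: XM M = [set outer E].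
Proof.
move=> E_D; have /cards1P[w Ew] : #|E :\: XM M| == 1.
  have := cardsID (XM M) E; rewrite D_XM // card_D_U // (F_uniform (D_F E_D)) => /eqP.
  by rewrite -[3]/(2 + 1) eqn_add2l.
by rewrite Ew /outer; case: pickP => [w' | /(_ w)]; rewrite Ew !inE ?eqxx // => /eqP->.
Qed.

Lemma outer_spec E w : E \in D -> (w \in E) && (w \notin XM M) = (w == outer E).
Proof. by move=> E_D; rewrite andbC -in_setD outerE // inE. Qed.

Lemma D_vtx_cases E x y z : E \in D -> x < 9 -> y < 9 -> z < 9 -> x != y ->
  vtx x \in E -> vtx y \in E -> vtx z \in E -> (z == x) || (z == y).
Proof.
move=> E_D lt_x9 lt_y9 lt_z9 neq_xy xE yE zE; apply/negPn/negP.
rewrite negb_or ![z == _]eq_sym => /andP[neq_xz neq_yz].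
have vtx_neq a b : a < 9 -> b < 9 -> a != b -> vtx a != vtx b.
  by move=> lt_a9 lt_b9; apply: contra_neq; apply: vtx_inj.
have sub_EU : [set vtx x; vtx y; vtx z] \subset E :&: U.
  by rewrite !subUset !sub1set !in_setI !vtx_U xE yE zE.
move: (subset_leq_card sub_EU); rewrite card_D_U //.
by rewrite -setUA cardsU1 cards2 !inE negb_or !vtx_neq.
Qed.

Definition joined (x y : nat) : bool :=
  [&& x < 9, y < 9, x != y & [exists E in D, (vtx x \in E) && (vtx y \in E)]].

Definition joining (x y : nat) : {set T} :=
  odflt set0 [pick E in D | (vtx x \in E) && (vtx y \in E)].

Definition apex (x y : nat) : T := outer (joining x y).

Lemma joiningP x y : joined x y ->
  [/\ joining x y \in D, vtx x \in joining x y & vtx y \in joining x y].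
Proof.
case/and4P=> _ _ _ /existsP[E /andP[E_D /andP[xE yE]]].
rewrite /joining; case: pickP => [E' /andP[E'_D /andP[xE' yE']] // | /(_ E)].
by rewrite E_D xE yE.
Qed.

Lemma joining_eq x y E :
  joined x y -> E \in D -> vtx x \in E -> vtx y \in E -> joining x y = E.
Proof.
move=> exy E_D xE yE; have [H_D xH yH] := joiningP exy.
case/and4P: exy => lt_x9 lt_y9 neq_xy _.
apply: linear_eq F_linear (D_F H_D) (D_F E_D) _ xH yH xE yE.
by apply: contra_neq neq_xy; apply: vtx_inj.
Qed.

Lemma joined_sym : symmetric joined.
Proof.
suff swap x y : joined x y -> joined y x by move=> x y; apply/idP/idP; apply: swap.
case/and4P=> lt_x9 lt_y9 neq_xy /existsP[E /andP[E_D /andP[xE yE]]].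
by apply/and4P; split; rewrite // 1?eq_sym //; apply/existsP; exists E; rewrite E_D xE yE.
Qed.

Lemma apex_sym x y : joined x y -> apex x y = apex y x.
Proof.
move=> exy; have [H_D xH yH] := joiningP exy.
by rewrite /apex (joining_eq _ H_D yH xH) // joined_sym.
Qed.

Lemma joining_vtx x y z :
  joined x y -> z < 9 -> vtx z \in joining x y -> (z == x) || (z == y).
Proof.
move=> exy lt_z9; have [H_D xH yH] := joiningP exy.
by case/and4P: exy => lt_x9 lt_y9 neq_xy _; apply: D_vtx_cases.
Qed.

Lemma vtx_XM x : vtx x \in XM M.
Proof. exact: subsetP U_XM _ (vtx_U x). Qed.

Lemma apex_proper x y z : joined x y -> joined x z -> y != z -> apex x y != apex x z.
Proof.
move=> exy exz neq_yz; apply/eqP => same_colour.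
have [Hy_D xHy yHy] := joiningP exy; have [Hz_D xHz zHz] := joiningP exz.
have [wHy wy_out] : outer (joining x y) \in joining x y /\ outer (joining x y) \notin XM M.
  by apply/andP; rewrite outer_spec.
have [wHz _] : outer (joining x y) \in joining x z /\ outer (joining x y) \notin XM M.
  by apply/andP; rewrite [outer (joining x y)]same_colour outer_spec.
have neq_xw : vtx x != outer (joining x y) by apply: contraNneq wy_out => <-; apply: vtx_XM.
have := linear_eq F_linear (D_F Hy_D) (D_F Hz_D) neq_xw xHy wHy xHz wHz.
move=> Hyz; case/and4P: exz => _ lt_z9 neq_xz _.
move: (joining_vtx exy lt_z9); rewrite Hyz zHz => /(_ isT).
by rewrite ![z == _]eq_sym (negbTE neq_xz) (negbTE neq_yz).
Qed.

Lemma joining_disjoint x y x' y' : joined x y -> joined x' y' -> apex x y != apex x' y' ->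
  (forall t, t \in [:: x; y] -> t \in [:: x'; y'] -> False) ->
  [disjoint joining x y & joining x' y'].
Proof.
move=> exy ex'y' apex_neq ends_disj; have [H_D _ _] := joiningP exy.
have [H'_D _ _] := joiningP ex'y'.
apply/pred0P => u /=; apply/negbTE/andP => -[u_H u_H'].
have [u_XM | u_out] := boolP (u \in XM M).
  have [t lt_t9 ut] := D_vtx H_D u_H u_XM; rewrite -ut in u_H u_H'.
  by apply: (ends_disj t); rewrite !inE; apply: joining_vtx lt_t9 _.
have /eqP ux : u == apex x y by rewrite -outer_spec // u_H u_out.
have /eqP ux' : u == apex x' y' by rewrite -outer_spec // u_H' u_out.
by move: apex_neq; rewrite -ux -ux' eqxx.
Qed.

Lemma joining_disjoint_member x y Z : joined x y -> Z \in M ->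
  member (part x) != Z -> member (part y) != Z -> [disjoint joining x y & Z].
Proof.
move=> exy Z_M neq_xZ neq_yZ; have [H_D _ _] := joiningP exy.
apply/pred0P => u /=; apply/negbTE/andP => -[u_H u_Z].
have u_XM : u \in XM M by apply: subsetP (bigcup_sup _ Z_M) _ u_Z.
have [t lt_t9 ut] := D_vtx H_D u_H u_XM; rewrite -ut in u_H u_Z.
have neq_tZ : member (part t) != Z by case/orP: (joining_vtx exy lt_t9 u_H) => /eqP->.
have := M_disjoint (member_M _) Z_M neq_tZ.
by move=> /disjointFr/(_ (vtx_member t)); rewrite u_Z.
Qed.

Lemma apex_rainbow_le es ks :
  all (fun e => joined e.1 e.2) es -> uniq (ends es) -> uniq [seq apex e.1 e.2 | e <- es] ->
  {subset map part (ends es) <= ks} -> size es <= size ks.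
Proof.
move=> /allP es_joined uniq_ends uniq_apex parts_ks.
pose H (e : nat * nat) := joining e.1 e.2.
have uniq_H : uniq (map H es) by apply: (@map_uniq _ _ outer); rewrite -map_comp.
have -> : size es = #|[set E in map H es]| by rewrite cardsE (card_uniqP uniq_H) size_map.
apply: leq_trans (_ : #|[set Z in map (fun k => member k) ks]| <= _); last first.
  by rewrite cardsE (leq_trans (card_size _)) ?size_map.
apply: (maximum_matching_exchange M_max).
- by apply/subsetP => Z; rewrite inE => /mapP[k _ ->]; apply: member_M.
- split=> [|E E']; rewrite ?inE.
    by apply/subsetP => E; rewrite inE => /mapP[e /es_joined/joiningP[/D_F E_F _ _] ->].
  move=> /mapP[e e_es ->] /mapP[f f_es ->] neq_Hef.
  have neq_ef : e != f by apply: contra_neq neq_Hef => ->.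
  apply: joining_disjoint; rewrite ?es_joined //.
    exact: uniq_map_neq uniq_apex e_es f_es neq_ef.
  by move=> t; apply: ends_disjoint uniq_ends e_es f_es neq_ef.
- rewrite inE; apply/mapP => -[e /es_joined/joiningP[_ x_H _] H0].
  by move: x_H; rewrite -[joining _ _]/(H e) -H0 inE.
move=> E Z; rewrite !inE => /mapP[e e_es ->] /andP[Z_R Z_M].
have member_R t : t \in [:: e.1; e.2] -> member (part t) != Z.
  move=> t_e; apply: contraNneq Z_R => <-; apply/map_f/parts_ks/map_f.
  by rewrite mem_ends; apply/hasP; exists e; rewrite // -mem_seq2.
by apply: joining_disjoint_member; rewrite ?es_joined ?member_R ?mem_head // inE mem_head orbT.
Qed.

Lemma D_joining E : E \in D ->
  exists2 e, e \in [seq e <- cross_pairs | joined e.1 e.2] & E = joining e.1 e.2.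
Proof.
move=> E_D; have /cards2P[u [w [neq_uw EU]]] : #|E :&: U| == 2 by rewrite card_D_U.
have [uE uU] : u \in E /\ u \in U by apply/andP; rewrite -in_setI EU !inE eqxx.
have [wE wU] : w \in E /\ w \in U by apply/andP; rewrite -in_setI EU !inE eqxx orbT.
have [x lt_x9 ux] := vtx_onto uU; have [y lt_y9 wy] := vtx_onto wU.
have neq_xy : x != y by apply: contra_neq neq_uw => eq_xy; rewrite -ux -wy eq_xy.
have part_xy : part x != part y.
  apply/eqP => eq_part; have mF := subsetP M_F _ (member_M (part x)).
  have uw_m : (u \in member (part x)) && (w \in member (part x)).
    by rewrite -ux -wy {2}eq_part !vtx_member.
  case/andP: uw_m => um wm; have E_m := linear_eq F_linear (D_F E_D) mF neq_uw uE wE um wm.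
  by move: (card_D_U E_D); rewrite E_m (setIidPl (member_U _)) card_member.
have cross a b : a < b -> b < 9 -> part a != part b -> vtx a \in E -> vtx b \in E ->
    exists2 e, e \in [seq e <- cross_pairs | joined e.1 e.2] & E = joining e.1 e.2.
  move=> lt_ab lt_b9 part_ab aE bE; have lt_a9 := ltn_trans lt_ab lt_b9.
  have eab : joined a b.
    by rewrite /joined lt_a9 lt_b9 ltn_eqF //; apply/existsP; exists E; rewrite E_D aE bE.
  exists (a, b); first by rewrite mem_filter mem_cross_pairs lt_ab lt_b9 part_ab eab.
  by rewrite (joining_eq eab E_D aE bE).
case: (ltngtP x y) => [lt_xy | lt_yx | eq_xy]; last by rewrite eq_xy eqxx in neq_xy.
  by apply: (cross x y); rewrite ?ux ?wy.
by apply: (cross y x); rewrite 1?eq_sym ?ux ?wy.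
Qed.

Lemma card_D_le : #|D| <= count (fun e => joined e.1 e.2) cross_pairs.
Proof.
set present := [seq e <- cross_pairs | joined e.1 e.2].
have D_sub : D \subset [set E in map (fun e => joining e.1 e.2) present].
  apply/subsetP => E /D_joining[e e_present ->]; rewrite inE.
  exact: (map_f (fun e : nat * nat => joining e.1 e.2)).
rewrite -size_filter -/present; apply: leq_trans (subset_leq_card D_sub) _.
by rewrite cardsE (leq_trans (card_size _)) ?size_map.
Qed.

Lemma card_D2ABC_le : #|D| <= 21.
Proof.
apply: leq_trans card_D_le _.
exact: present_cross_pairs_le joined_sym apex_sym apex_proper apex_rainbow_le.
Qed.
End ThreeMembers.

Theorem proposition5 (T : finType) (F M : {set {set T}}) (A B C : {set T}) :
  uniform3 F -> linear_family F -> is_maximum_matching F M ->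
  A \in M -> B \in M -> C \in M -> A != B -> A != C -> B != C ->
  #|D2ABC F M A B C| <= 21.
Proof.
move=> F_uniform F_linear M_max A_M B_M C_M neq_AB neq_AC neq_BC.
have [x0 _] : {x0 | x0 \in A}.
  by apply/sigW/card_gt0P; rewrite F_uniform // (subsetP (M_F M_max)).
exact: card_D2ABC_le x0 F_uniform F_linear M_max A_M B_M C_M neq_AB neq_AC neq_BC.
Qed.
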